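(* Let $\mu_1,\mu_2,\beta>0$, $p>2$, $c_1,c_2>0$ with $c_1+c_2<4^{\frac{p-2}{2p-3}}\big[\frac{p(p-2)^{p-2}}{K_{2p}\mu_0(p-1)^p}\big]^{\frac1{2p-3}}$, $\mu_0=\max\{\mu_1+\beta,\mu_2+\beta\}$. Then $Q(u)+Q(v)<\frac{p-1}{p-2}\frac{(c_1+c_2)^2}4$ for all $(u,v)\in\Omega^+(c_1,c_2)$, and $Q(u)+Q(v)>\frac{p-1}{p-2}\frac{(c_1+c_2)^2}4$ for all $(u,v)\in\Omega^-(c_1,c_2)$.
   Context: $E:=\{u\in H^1(\mathbb{R}^2):\int\log(1+|x|^2)u^2dx<\infty\}$; $S(c):=\{w\in E:\int w^2dx=c\}$. $Q(u)=\int|\nabla u|^2$, $R(u,v)=\mu_1\int|u|^{2p}+\mu_2\int|v|^{2p}+2\beta\int|uv|^p$, $W_0(u,v)=\iint\log|x-y|(u^2(x)+v^2(x))(u^2(y)+v^2(y))dxdy$. For $(u,v)\in S(c_1)\times S(c_2)$ and $t>0$, $F_{u,v}(t)=\frac{t^2}2(Q(u)+Q(v))+\frac14[W_0(u,v)-(c_1+c_2)^2\log t]-\frac{t^{2p-2}}{2p}R(u,v)$. $\Omega^{\pm}(c_1,c_2)$ is the set of $(u,v)\in S(c_1)\times S(c_2)$ with $F'_{u,v}(1)=0$ and $\pm F''_{u,v}(1)>0$. $K_{2p}$ is the best constant in $\|u\|_{2p}^{2p}\le K_{2p}\|\nabla u\|_2^{2p-2}\|u\|_2^2$ on $H^1(\mathbb{R}^2)$.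 *)

(* over an arbitrary R : realType; R^2 is modelled as R * R
   with the product Lebesgue measure. *)
From HB Require Import structures.
From mathcomp Require Import all_boot all_order all_algebra.
From mathcomp Require Import all_classical all_reals all_analysis.
Set Implicit Arguments. Unset Strict Implicit. Unset Printing Implicit Defensive.
Import Order.TTheory GRing.Theory Num.Theory.
Import numFieldNormedType.Exports.
Local Open Scope classical_set_scope.
Local Open Scope ring_scope.

Section Defs.
Variable R : realType.

Local Notation leb2 := ((@lebesgue_measure R) \x (@lebesgue_measure R))%E.
Local Notation leb4 := (leb2 \x leb2)%E.

Definition int2 (f : R * R -> R) : R := Rintegral leb2 setT f.

Definition d1 (phi : R * R -> R) (x : R * R) : R :=
  derive1 (fun t => phi (t, x.2)) x.1.
Definition d2 (phi : R * R -> R) (x : R * R) : R :=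
  derive1 (fun t => phi (x.1, t)) x.2.

Definition test_fun (phi : R * R -> R) : Prop :=
  [/\ continuous phi /\ continuous (d1 phi) /\ continuous (d2 phi),
      (forall x : R * R, derivable (fun t => phi (t, x.2)) x.1 1),
      (forall x : R * R, derivable (fun t => phi (x.1, t)) x.2 1) &
      exists M : R, forall x : R * R, M < `|x.1| \/ M < `|x.2| -> phi x = 0].

Definition sq_integrable (f : R * R -> R) : Prop :=
  measurable_fun setT f /\ (\int[leb2]_x ((f x) ^+ 2)%:E < +oo)%E.

(* u in H^1(R^2), with weak gradient (g1, g2) (weak derivatives are unique a.e.) *)
Definition H1 (u g1 g2 : R * R -> R) : Prop :=
  [/\ sq_integrable u, sq_integrable g1, sq_integrable g2,
      (forall phi, test_fun phi ->
         int2 (fun x => u x * d1 phi x) = - int2 (fun x => g1 x * phi x)) &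
      (forall phi, test_fun phi ->
         int2 (fun x => u x * d2 phi x) = - int2 (fun x => g2 x * phi x))].

Definition Qf (g1 g2 : R * R -> R) : R := int2 (fun x => g1 x ^+ 2 + g2 x ^+ 2).

Definition inE (u g1 g2 : R * R -> R) : Prop :=
  H1 u g1 g2 /\
  (\int[leb2]_x ((ln (1 + (x.1 ^+ 2 + x.2 ^+ 2))) * u x ^+ 2)%:E < +oo)%E.

Definition inS (c : R) (w g1 g2 : R * R -> R) : Prop :=
  inE w g1 g2 /\ int2 (fun x => w x ^+ 2) = c.

Definition Rf (mu1 mu2 beta p : R) (u v : R * R -> R) : R :=
  mu1 * int2 (fun x => `|u x| `^ (2 * p)) + mu2 * int2 (fun x => `|v x| `^ (2 * p))
  + 2 * beta * int2 (fun x => `|u x * v x| `^ p).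

Definition W0 (u v : R * R -> R) : R :=
  fine (\int[leb4]_z
    (ln (Num.sqrt ((z.1.1 - z.2.1) ^+ 2 + (z.1.2 - z.2.2) ^+ 2))
     * (u z.1 ^+ 2 + v z.1 ^+ 2) * (u z.2 ^+ 2 + v z.2 ^+ 2))%:E)%E.

Definition Ff (mu1 mu2 beta p c1 c2 : R) (u gu1 gu2 v gv1 gv2 : R * R -> R)
  (t : R) : R :=
  t ^+ 2 / 2 * (Qf gu1 gu2 + Qf gv1 gv2)
  + 4^-1 * (W0 u v - (c1 + c2) ^+ 2 * ln t)
  - t `^ (2 * p - 2) / (2 * p) * Rf mu1 mu2 beta p u v.

Definition Omega_plus (mu1 mu2 beta p c1 c2 : R) (u gu1 gu2 v gv1 gv2 : R * R -> R)
  : Prop :=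
  [/\ inS c1 u gu1 gu2, inS c2 v gv1 gv2,
      derive1 (Ff mu1 mu2 beta p c1 c2 u gu1 gu2 v gv1 gv2) 1 = 0 &
      0 < derive1 (derive1 (Ff mu1 mu2 beta p c1 c2 u gu1 gu2 v gv1 gv2)) 1].

Definition Omega_minus (mu1 mu2 beta p c1 c2 : R) (u gu1 gu2 v gv1 gv2 : R * R -> R)
  : Prop :=
  [/\ inS c1 u gu1 gu2, inS c2 v gv1 gv2,
      derive1 (Ff mu1 mu2 beta p c1 c2 u gu1 gu2 v gv1 gv2) 1 = 0 &
      derive1 (derive1 (Ff mu1 mu2 beta p c1 c2 u gu1 gu2 v gv1 gv2)) 1 < 0].

Definition K2p (p : R) : R :=
  inf [set C : R | forall u g1 g2, H1 u g1 g2 ->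
        int2 (fun x => `|u x| `^ (2 * p))
        <= C * (Qf g1 g2) `^ (p - 1) * int2 (fun x => u x ^+ 2)].

End Defs.

(* At t = 1 the fibering map F(t) = t^2 Q/2 + (W - C ln t)/4 - t^e A/k has
   F'(1) = Q - C/4 - (e/k) A and F''(1) = Q + C/4 - (e - 1)(e/k) A.  Eliminating the
   nonlinear term (e/k) A with F'(1) = 0 leaves F''(1) = (2 - e) Q + e C/4, whose sign
   for e = 2p - 2 > 2 compares Q with (p - 1)/(p - 2) * C/4.  No property of u, v,
   nor the smallness of c1 + c2, is needed for this dichotomy. *)
From HB Require Import structures.
From mathcomp Require Import all_boot all_order all_algebra.
From mathcomp Require Import all_classical all_reals all_analysis.
From mathcomp Require Import ring lra.
Set Implicit Arguments. Unset Strict Implicit. Unset Printing Implicit Defensive.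
Import Order.TTheory GRing.Theory Num.Theory.
Import numFieldNormedType.Exports.
Local Open Scope ring_scope.

Section Fibering.
Variable R : realType.
Variables (Q W C A e k : R).

Definition fiber (t : R) : R :=
  t ^+ 2 / 2 * Q + 4^-1 * (W - C * ln t) - t `^ e / k * A.

Definition fiber' (t : R) : R :=
  t * Q - 4^-1 * C * t^-1 - e * t `^ (e - 1) / k * A.

Definition fiber'' (t : R) : R :=
  Q + 4^-1 * C * t^-2 - e * ((e - 1) * t `^ (e - 1 - 1)) / k * A.

Lemma is_derive_fiber (t : R) : 0 < t -> is_derive t 1 fiber (fiber' t).
Proof.
(* The local [is_derive] facts are found by instance resolution in [is_derive_eq]. *)
move=> t_gt0; have ln_t := is_derive1_ln t_gt0; have pow_t := is_derive1_powR e t_gt0.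
apply: is_derive_eq.
rewrite !scaler0 !add0r mul1r /GRing.scale /= ?mulr1 /fiber'.
have -> : (2 : R)^-1 * (t + t) = t by lra.
rewrite mulrC; congr (_ - _); first by rewrite mulrN mulrA.
by rewrite mulrC [k^-1 * _]mulrC.
Qed.

Lemma is_derive_fiber' (t : R) : 0 < t -> is_derive t 1 fiber' (fiber'' t).
Proof.
move=> t_gt0; have pow_t := is_derive1_powR (e - 1) t_gt0.
have inv_t : is_derive t 1 (fun x : R => x^-1) (- t ^- 2).
  have := @is_deriveV R id t 1 1 (lt0r_neq0 t_gt0) (is_derive_id _ _).
  by rewrite /= scaler1.
apply: is_derive_eq; rewrite !scaler0 !add0r /GRing.scale /= ?mulr1.
rewrite /fiber''; congr (_ - _); first by rewrite mulrN opprK.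
by rewrite mulrC [k^-1 * _]mulrC.
Qed.

Lemma derive1_fiber_at1 : derive1 fiber 1 = Q - 4^-1 * C - e / k * A.
Proof.
rewrite derive1E; have [_ ->] := is_derive_fiber ltr01.
by rewrite /fiber' powR1 invr1 mul1r !mulr1.
Qed.

Lemma derive2_fiber_at1 :
  derive1 (derive1 fiber) 1 = Q + 4^-1 * C - (e - 1) * (e / k * A).
Proof.
rewrite derive1E.
have -> : 'D_1 (derive1 fiber) 1 = 'D_1 fiber' 1.
  apply: near_eq_derive; apply: filterS (lt_nbhsr ltr01) => t t_gt0.
  by rewrite derive1E; have [_ ->] := is_derive_fiber t_gt0.
have [_ ->] := is_derive_fiber' ltr01.
rewrite /fiber'' powR1 expr1n invr1 !mulr1; ring.
Qed.

Lemma derive2_fiber_critical :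
  derive1 fiber 1 = 0 -> derive1 (derive1 fiber) 1 = (2 - e) * Q + e * (C / 4).
Proof.
rewrite derive2_fiber_at1 derive1_fiber_at1 => crit.
have -> : e / k * A = Q - 4^-1 * C by lra.
ring.
Qed.

End Fibering.

Section CurvatureSign.
Variables (R : realType) (e Q X : R).
Hypothesis e_gt2 : 2 < e.

Lemma ratio_gtE : (Q < e / (e - 2) * X) = (0 < (2 - e) * Q + e * X).
Proof.
have e2_gt0 : 0 < e - 2 by rewrite subr_gt0.
rewrite mulrAC ltr_pdivlMr // -subr_gt0.
by congr (0 < _); ring.
Qed.

Lemma ratio_ltE : (e / (e - 2) * X < Q) = ((2 - e) * Q + e * X < 0).
Proof.
have e2_gt0 : 0 < e - 2 by rewrite subr_gt0.
rewrite mulrAC ltr_pdivrMr // -subr_lt0.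
by congr (_ < 0); ring.
Qed.

End CurvatureSign.

Lemma Ff_fiberE (R : realType) (mu1 mu2 beta p c1 c2 : R)
    (u gu1 gu2 v gv1 gv2 : R * R -> R) :
  Ff mu1 mu2 beta p c1 c2 u gu1 gu2 v gv1 gv2 =
  fiber (Qf gu1 gu2 + Qf gv1 gv2) (W0 u v) ((c1 + c2) ^+ 2)
        (Rf mu1 mu2 beta p u v) (2 * p - 2) (2 * p).
Proof. by []. Qed.

Theorem lemma4p7 (R : realType) (mu1 mu2 beta p c1 c2 : R) :
  0 < mu1 -> 0 < mu2 -> 0 < beta -> 2 < p -> 0 < c1 -> 0 < c2 ->
  c1 + c2 < 4 `^ ((p - 2) / (2 * p - 3)) *
    (p * (p - 2) `^ (p - 2) /
      (K2p p * Num.max (mu1 + beta) (mu2 + beta) * (p - 1) `^ p)) `^ (2 * p - 3)^-1 ->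
  (forall u gu1 gu2 v gv1 gv2 : R * R -> R,
     Omega_plus mu1 mu2 beta p c1 c2 u gu1 gu2 v gv1 gv2 ->
     Qf gu1 gu2 + Qf gv1 gv2 < (p - 1) / (p - 2) * ((c1 + c2) ^+ 2 / 4)) /\
  (forall u gu1 gu2 v gv1 gv2 : R * R -> R,
     Omega_minus mu1 mu2 beta p c1 c2 u gu1 gu2 v gv1 gv2 ->
     (p - 1) / (p - 2) * ((c1 + c2) ^+ 2 / 4) < Qf gu1 gu2 + Qf gv1 gv2).
Proof.
move=> _ _ _ p_gt2 _ _ _.
have e_gt2 : 2 < 2 * p - 2 by lra.
have -> : (p - 1) / (p - 2) = (2 * p - 2) / (2 * p - 2 - 2).
  by field; rewrite !subr_eq0 !gt_eqF.
split=> u gu1 gu2 v gv1 gv2 [_ _ crit curv]; rewrite Ff_fiberE in crit curv;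
  by rewrite (ratio_gtE, ratio_ltE) // -(derive2_fiber_critical crit).
Qed.
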